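(* Let $(X,\rho)$ be a compact metric space, $T\colon X\to X$ continuous, $d\ge2$, and $\lambda$ a non-atomic Borel probability measure on $X$ such that the product measure $\lambda_d$ on $X^d$ is conservative for $T_d=T\times\cdots\times T$. Then the set of $d$-tuples $(x_1,\dots,x_d)$ which are not asymptotic has full $\lambda_d$-measure.
   Context: A $d$-tuple $(x_1,\dots,x_d)$ is asymptotic if $\lim_{n\to\infty}\max_{i,j}\rho(T^n x_i,T^n x_j)=0$. A measure $m$ is conservative for a map $S$ if for every measurable $A$ with $m(A)>0$ there is $n>0$ with $m(A\cap S^n(A))>0$. *)

From HB Require Import structures.
From mathcomp Require Import all_boot all_order all_algebra.
From mathcomp Require Import all_classical all_reals all_analysis.
Set Implicit Arguments. Unset Strict Implicit. Unset Printing Implicit Defensive.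
Import Order.TTheory GRing.Theory Num.Theory.
Import numFieldNormedType.Exports.
Local Open Scope classical_set_scope.
Local Open Scope ring_scope.

(* g_sigma_algebraType needs a pointedType; metricType is not pointed, so we
   use an alias of X pointed at a given x0 (X carries a probability measure,
   hence is nonempty, so this costs nothing). *)
Section Pointed_alias.
Context (R : realType) (X : metricType R).
Definition ptd_metric (x0 : X) : Type := X.
Context (x0 : X).
HB.instance Definition _ := Choice.on (ptd_metric x0).
#[non_forgetful_inheritance]
HB.instance Definition _ := isPointed.Build (ptd_metric x0) x0.
End Pointed_alias.

Notation Borel X x0 :=
  (g_sigma_algebraType (@open X : set (set (@ptd_metric _ X x0)))).

Definition prodmap (X : Type) (d : nat) (T : X -> X) (t : d.-tuple X) : d.-tuple X :=
  map_tuple T t.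

Definition asymptotic (R : realType) (X : metricType R) (T : X -> X) (d : nat)
    (t : d.-tuple X) : Prop :=
  (fun n : nat => \big[Num.max/0]_(i < d) \big[Num.max/0]_(j < d)
      mdist (iter n T (tnth t i)) (iter n T (tnth t j))) @ \oo --> (0 : R).

(* Conservativity: for every measurable A with m(A) > 0 there is n > 0 with
   m(A cap S^n(A)) > 0.  Since S^n(A) need not be measurable, "m(B) > 0" for
   B = A cap S^n(A) is expressed as "B is not m-negligible" (i.e. positive
   outer/completed measure). *)
Definition conservative (dT : measure_display) (Y : measurableType dT) (R : realType)
    (m : set Y -> \bar R) (S : Y -> Y) : Prop :=
  forall A : set Y, measurable A -> (0 < m A)%E ->
    exists n : nat, (0 < n)%N /\ ~ m.-negligible (A `&` (iter n S) @` A).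

(* The diagonal is negligible: by non-atomicity and compactness, for every e > 0
   the space X splits into finitely many Borel pieces P_k of measure at most e,
   and the diagonal is covered by the cubes P_k^d, of total measure at most
   sum_k lam(P_k)^2 <= e.  An asymptotic tuple off the diagonal has, for some m,
   a last time k at which its orbit diameter is at least 1/(m+1); the set of such
   tuples is disjoint from all its images under T_d^n, n > 0, so conservativity
   forces it to be null. *)

From HB Require Import structures.
From mathcomp Require Import all_boot all_order all_algebra.
From mathcomp Require Import all_classical all_reals all_analysis.
From mathcomp Require Import lra.
Set Implicit Arguments. Unset Strict Implicit. Unset Printing Implicit Defensive.
Import Order.TTheory GRing.Theory Num.Theory.
Import numFieldNormedType.Exports.
Local Open Scope classical_set_scope.
Local Open Scope ring_scope.

Lemma natSinv_gt0 (R : numFieldType) (k : nat) : 0 < k.+1%:R^-1 :> R.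
Proof. by rewrite invr_gt0. Qed.

Lemma exists_natSinv_lt (R : realType) (e : R) : 0 < e -> exists n : nat, n.+1%:R^-1 < e.
Proof.
move=> e0; have [N _ /(_ N (leqnn _))] := near_infty_natSinv_lt (PosNum e0).
by exists N.
Qed.

Section metric_space.
Context (R : realType) (X : metricType R).

Lemma mdist_ball_open (c : X) (r : R) : open [set y | mdist c y < r].
Proof.
rewrite openE => x /= cx; have rx0 : 0 < r - mdist c x by rewrite subr_gt0.
apply: filterS (nbhsx_ballx x _ rx0) => y; rewrite ballEmdist /= => xy.
by rewrite (le_lt_trans (metric_triangle c x y)) // -ltrBrDl.
Qed.

Section pointed.
Variable x0 : X.
(* [compact_cover] is stated for pointed topological spaces. *)
HB.instance Definition _ := Topological.on (ptd_metric x0).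

Lemma compact_finite_mdist_cover (rad : X -> R) : compact [set: X] ->
  (forall c, 0 < rad c) -> exists s : seq X, forall x, exists2 c, c \in s & mdist c x < rad c.
Proof.
move=> cX rad0; have : @cover_compact (ptd_metric x0) [set: X] by rewrite -compact_cover.
case/(_ X setT (fun c => [set y | mdist c y < rad c])).
- by move=> c _; exact: mdist_ball_open.
- by move=> x _; exists x => //=; rewrite mdistxx.
by move=> D _ cov; exists (finmap.enum_fset D) => x; have [c /= ? ?] := cov x I; exists c.
Qed.
End pointed.

Lemma bigcap_mdist_ballS (x : X) :
  \bigcap_n [set y | mdist x y < n.+1%:R^-1] = [set x].
Proof.
apply/seteqP; split => [y xy|_ -> n _]; last by rewrite /= mdistxx natSinv_gt0.
apply/esym/mdist_positivity/eqP; rewrite eq_le mdist_ge0 andbT leNgt.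
apply/negP => /exists_natSinv_lt[n /(lt_trans (xy n I))]; by rewrite ltxx.
Qed.

Lemma seq_lower_bound_gt0 (T : eqType) (s : seq T) (f : T -> R) :
  (forall x, 0 < f x) -> exists2 r, 0 < r & forall x, x \in s -> r <= f x.
Proof.
move=> f0; elim: s => [|a s [r r0 hr]]; first by exists 1.
exists (Num.min r (f a)); first by rewrite lt_min r0 f0.
by move=> x; rewrite inE => /predU1P[->|/hr]; rewrite ge_min ?lexx ?orbT // => ->.
Qed.

End metric_space.

Section borel_metric.
Context (R : realType) (X : metricType R) (x0 : X).
Local Notation B := (Borel X x0).

Lemma measurable_open (A : set X) : open A -> measurable (A : set B).
Proof. exact: sub_sigma_algebra. Qed.

Lemma measurable_mdist_ball (c : X) (r : R) :
  measurable ([set y | mdist c y < r] : set B).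
Proof. by apply: measurable_open; exact: mdist_ball_open. Qed.

End borel_metric.

Section nonatomic_measure.
Context (R : realType) (X : metricType R) (x0 : X).
Local Notation B := (Borel X x0).
Context (lam : probability B R) (lam_nonatomic : forall x : X, lam [set x] = 0%E).

Lemma mdist_ball_small_at (x : X) (e : R) : 0 < e ->
  exists2 r, 0 < r & (lam [set y | (mdist x y < r)%R] < e%:E)%E.
Proof.
move=> e0; pose F n : set B := [set y | mdist x y < n.+1%:R^-1].
have mF n : measurable (F n) by exact: measurable_mdist_ball.
have F_nonincr : nonincreasing_seq F.
  move=> m n mn; apply/subsetPset => y /lt_le_trans; apply.
  by rewrite lef_pV2 ?posrE // ler_nat ltnS.
have : (lam \o F) @ \oo --> 0%E.
  rewrite -(lam_nonatomic x) -bigcap_mdist_ballS.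
  apply: nonincreasing_cvg_mu => //; last exact: bigcapT_measurable.
  exact: le_lt_trans (probability_le1 _ (mF 0%N)) (ltry _).
move/fine_cvgP => [[M _ Mfin] Fcvg]; have [N _ FN] := cvgr_lt _ Fcvg _ e0.
exists (maxn N M).+1%:R^-1; first exact: natSinv_gt0.
have := FN _ (leq_maxl N M); have := Mfin _ (leq_maxr N M).
by rewrite /= => /fineK <-; rewrite lte_fin.
Qed.

Lemma mdist_ball_small (e : R) : compact [set: X] -> 0 < e ->
  exists2 r, 0 < r & forall c : X, (lam [set y | (mdist c y < r)%R] < e%:E)%E.
Proof.
move=> cX e0; pose rx x := projT1 (cid2 (mdist_ball_small_at x e0)).
have rx0 x : 0 < rx x by rewrite /rx; case: cid2.
have rxe x : (lam [set y | (mdist x y < rx x)%R] < e%:E)%E by rewrite /rx; case: cid2.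
have rx2 x : 0 < rx x / 2 by rewrite divr_gt0.
have [s cover] := compact_finite_mdist_cover x0 (rad := fun x => rx x / 2) cX rx2.
have [r r0 rs] := seq_lower_bound_gt0 s rx2.
exists r => // c; have [x xs xc] := cover c.
apply: le_lt_trans (rxe x); apply: le_measure; rewrite ?inE; try exact: measurable_mdist_ball.
move=> y /= cy; apply: le_lt_trans (metric_triangle x c y) _.
by rewrite [rx x]splitr ltrD // (lt_le_trans cy (rs x xs)).
Qed.

End nonatomic_measure.

Lemma negligible_small_covers (dT : measure_display) (T : measurableType dT)
    (R : realType) (mu : {measure set T -> \bar R}) (A : set T) :
  (forall e : R, 0 < e -> exists Q, [/\ measurable Q, (mu Q <= e%:E)%E & A `<=` Q]) ->
  mu.-negligible A.
Proof.
move=> small; pose Q m := projT1 (cid (small _ (natSinv_gt0 R m))).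
have QP m : [/\ measurable (Q m), (mu (Q m) <= (m.+1%:R^-1)%:E)%E & A `<=` Q m].
  by rewrite /Q; case: cid.
have mQ m : measurable (Q m) by case: (QP m).
exists (\bigcap_m Q m); split; first exact: bigcapT_measurable.
- apply/eqP; rewrite eq_le measure_ge0 andbT; apply/lee_addgt0Pr => e e0.
  have [m me] := exists_natSinv_lt e0; have [_ Qm _] := QP m.
  rewrite add0e; apply: le_trans (le_trans Qm _); last by rewrite lee_fin ltW.
  by apply: le_measure; rewrite ?inE; [exact: bigcapT_measurable|exact: mQ|exact: bigcap_inf].
- by move=> a Aa m _; have [_ _] := QP m; apply.
Qed.

Lemma prode_cst_le_sqr (R : realDomainType) (n : nat) (a : \bar R) :
  (2 <= n)%N -> (0 <= a)%E -> (a <= 1)%E -> (\prod_(i < n) a <= a * a)%E.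
Proof.
move=> + a0 a1; elim: n => // n IH; rewrite leq_eqVlt => /predU1P[<-|].
  by rewrite !big_ord_recr /= big_ord0 mul1e.
rewrite ltnS => /IH; apply: le_trans; rewrite big_ord_recr /= -[leRHS]mule1.
by apply: lee_wpmul2l => //; exact: prode_ge0.
Qed.

Lemma probability_sum_trivIset_le1 (dT : measure_display) (T : measurableType dT)
    (R : realType) (P : probability T R) (F : nat -> set T) (n : nat) :
  (forall k, measurable (F k)) -> trivIset setT F -> (\sum_(k < n) P (F k) <= 1)%E.
Proof.
move=> mF tF; have mU : measurable (\big[setU/set0]_(k < n) F k).
  by apply: bigsetU_measurable => k _; exact: mF.
rewrite -measure_semi_additive_ord_I //; first exact: probability_le1.
exact: sub_trivIset tF.
Qed.

Definition diagonal {T : Type} {n : nat} : set (n.-tuple T) :=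
  [set t | forall i j, tnth t i = tnth t j].

Section tuple_measure.
Context (dT : measure_display) (T : measurableType dT) (n : nat).

Lemma measurable_box (A : 'I_n -> set T) : (forall i, measurable (A i)) ->
  measurable [set t : n.-tuple T | forall i, A i (tnth t i)].
Proof.
move=> mA; have -> : [set t : n.-tuple T | forall i, A i (tnth t i)] =
    \bigcap_(i in [set: 'I_n]) ((@tnth n T)^~ i @^-1` A i).
  by apply/seteqP; split => [t tA i _|t tA i]; [exact: tA|exact: tA i I].
apply: fin_bigcap_measurable => [|i _]; first exact: finite_finset.
by rewrite -[_ @^-1` _]setTI; exact: measurable_tnth.
Qed.

Lemma diagonal_sub_bigsetU_box (P : nat -> set T) (k : nat) : (0 < n)%N ->
  [set: T] `<=` \big[setU/set0]_(j < k) P j ->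
  (@diagonal T n) `<=` \big[setU/set0]_(j < k) [set t | forall i, P j (tnth t i)].
Proof.
move=> n0 cover t tD.
rewrite -(bigcup_mkord k (fun j => [set t : n.-tuple T | forall i, P j (tnth t i)])).
have := cover (tnth t (Ordinal n0)) I; rewrite -bigcup_mkord => -[j jk Pj].
by exists j => // i; rewrite (tD i (Ordinal n0)).
Qed.

End tuple_measure.

Section diagonal_negligible.
Context (R : realType) (X : metricType R) (x0 : X).
Local Notation B := (Borel X x0).
Context (lam : probability B R) (lam_nonatomic : forall x : X, lam [set x] = 0%E)
  (cX : compact [set: X]) (d : nat) (d2 : (2 <= d)%N)
  (lamd : {measure set (d.-tuple B) -> \bar R})
  (lamd_box : forall A : 'I_d -> set B, (forall i, measurable (A i)) ->
      lamd [set t | forall i, A i (tnth t i)] = (\prod_(i < d) lam (A i))%E).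

Lemma lamd_cube_le (A : set B) (e : R) : measurable A -> (lam A <= e%:E)%E ->
  (lamd [set t | forall i, A (tnth t i)] <= lam A * e%:E)%E.
Proof.
move=> mA Ae; rewrite (lamd_box (fun=> mA)).
apply: le_trans (prode_cst_le_sqr d2 (measure_ge0 _ _) (probability_le1 _ mA)) _.
exact: lee_wpmul2l (measure_ge0 _ _) _ _ Ae.
Qed.

Lemma diagonal_small_cover (e : R) : 0 < e ->
  exists Q, [/\ measurable Q, (lamd Q <= e%:E)%E & diagonal `<=` Q].
Proof.
move=> e0; have [r r0 small] := mdist_ball_small lam_nonatomic cX e0.
have [s s_cover] := compact_finite_mdist_cover x0 (rad := fun=> r) cX (fun=> r0).
pose P := seqDU (fun k => [set y : B | mdist (nth x0 s k) y < r]).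
have mP : forall k, measurable (P k).
  by apply: seqDU_measurable => k; exact: measurable_mdist_ball.
have P_small k : (lam (P k) <= e%:E)%E.
  apply: le_trans (ltW (small (nth x0 s k))); apply: le_measure; rewrite ?inE //.
    exact: measurable_mdist_ball.
  exact: subset_seqDU.
pose cube k := [set t : d.-tuple B | forall i, P k (tnth t i)].
have mcube k : measurable (cube k) by exact: measurable_box (fun=> mP k).
exists (\big[setU/set0]_(k < size s) cube k); split.
- by apply: bigsetU_measurable.
- have mU : measurable (\big[setU/set0]_(k < size s) cube k).
    by apply: bigsetU_measurable.
  apply: le_trans (content_subadditive lamd (n := size s) (fun k _ => mcube k) mU _) _ => //.
  have cube_le k : (lamd (cube k) <= lam (P k) * e%:E)%E.
    exact: lamd_cube_le (mP k) (P_small k).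
  apply: (@le_trans _ _ (\sum_(k < size s) lam (P k) * e%:E)%E).
    by apply: lee_sum => k _; exact: cube_le.
  rewrite -ge0_sume_distrl; last by move=> k _; exact: measure_ge0.
  rewrite -[leRHS]mul1e; apply: lee_wpmul2r; first by rewrite lee_fin ltW.
  by apply: probability_sum_trivIset_le1 => //; exact: trivIset_seqDU.
- apply: diagonal_sub_bigsetU_box (leq_trans _ d2) _ => // y _.
  rewrite -bigsetU_seqDU -(bigcup_mkord _ (fun k => [set y : B | mdist (nth x0 s k) y < r])).
  have [c cs cy] := s_cover y.
  by exists (index c s); rewrite /= ?index_mem ?nth_index.
Qed.

Lemma diagonal_negligible : lamd.-negligible diagonal.
Proof. exact/negligible_small_covers/diagonal_small_cover. Qed.

End diagonal_negligible.

Section compact_metric_measurable.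
Context (R : realType) (X : metricType R) (x0 : X) (cX : compact [set: X]).
Local Notation B := (Borel X x0).

Definition net (k : nat) : seq X :=
  projT1 (cid (compact_finite_mdist_cover x0 (rad := fun=> k.+1%:R^-1) cX (fun=> natSinv_gt0 R k))).

Lemma netP (k : nat) (x : X) : exists2 c, c \in net k & mdist c x < k.+1%:R^-1.
Proof. by rewrite /net; case: cid. Qed.

Lemma mdist_lt_net (x y : X) (r : R) : mdist x y < r <->
  exists k p q, let c := nth x0 (net k) in let delta := k.+1%:R^-1 in
    [/\ mdist (c p) (c q) < r - 2 * delta, mdist (c p) x < delta & mdist (c q) y < delta].
Proof.
split => [xy|[k [p [q [cpq cpx cqy]]]]]; last first.
  have := metric_triangle x (nth x0 (net k) p) y.
  have := metric_triangle (nth x0 (net k) p) (nth x0 (net k) q) y.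
  have := metric_sym x (nth x0 (net k) p).
  set delta := k.+1%:R^-1 in cpq cpx cqy *; lra.
have /exists_natSinv_lt[k kxy] : 0 < (r - mdist x y) / 4 by rewrite divr_gt0 // subr_gt0.
have [a an ax] := netP k x; have [b bn _by] := netP k y.
exists k, (index a (net k)), (index b (net k)); rewrite /= !nth_index //; split => //.
have := metric_triangle a x b; have := metric_triangle x y b.
rewrite (metric_sym b) in _by; set delta := k.+1%:R^-1 in kxy ax _by *; lra.
Qed.

(* A compact metric space is separable, so [mdist (f t) (g t) < r] is a countable
   union of intersections of ball preimages; no Borel structure on [X * X] is needed. *)
Lemma measurable_mdist_lt (dT : measure_display) (T : measurableType dT) (f g : T -> X) :
  (forall c r, measurable [set t | mdist c (f t) < r]) ->
  (forall c r, measurable [set t | mdist c (g t) < r]) ->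
  forall r, measurable [set t | mdist (f t) (g t) < r].
Proof.
move=> mf mg r; have -> : [set t | mdist (f t) (g t) < r] = \bigcup_k \bigcup_p \bigcup_q
    let c := nth x0 (net k) in let delta := k.+1%:R^-1 in
    if mdist (c p) (c q) < r - 2 * delta then
      [set t | mdist (c p) (f t) < delta] `&` [set t | mdist (c q) (g t) < delta]
    else set0.
  apply/seteqP; split => t.
  - move=> /mdist_lt_net[k [p [q /= [cpq cpf cqg]]]].
    by exists k => //; exists p => //; exists q => //=; rewrite cpq.
  - move=> [k _ [p _ [q _ /=]]]; case: ifP => // cpq [cpf cqg].
    by apply/mdist_lt_net; exists k, p, q.
apply: bigcupT_measurable => k; apply: bigcupT_measurable => p.
by apply: bigcupT_measurable => q /=; case: ifP => _ //; exact: measurableI.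
Qed.

End compact_metric_measurable.

Lemma conservative_wandering_null (dT : measure_display) (Y : measurableType dT)
    (R : realType) (mu : {measure set Y -> \bar R}) (S : Y -> Y) (A : set Y) :
  conservative mu S -> measurable A ->
  (forall n, (0 < n)%N -> A `&` iter n S @` A = set0) -> mu A = 0%E.
Proof.
move=> consS mA wander; apply/eqP; rewrite eq_le measure_ge0 andbT leNgt.
apply/negP => /(consS _ mA)[n [n0]]; rewrite wander //; apply; exact: negligible_set0.
Qed.

Section orbit_diameter.
Context (R : realType) (X : metricType R) (T : X -> X) (d : nat).

Definition orbit_diam (n : nat) (t : d.-tuple X) : R :=
  \big[Num.max/0]_(i < d) \big[Num.max/0]_(j < d)
    mdist (iter n T (tnth t i)) (iter n T (tnth t j)).

Lemma tnth_iter_prodmap n (t : d.-tuple X) i :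
  tnth (iter n (prodmap T) t) i = iter n T (tnth t i).
Proof. by elim: n => //= n IH; rewrite /prodmap tnth_map IH. Qed.

Lemma orbit_diam_iter_prodmap n m t :
  orbit_diam n (iter m (prodmap T) t) = orbit_diam (n + m) t.
Proof.
by apply: eq_bigr => i _; apply: eq_bigr => j _; rewrite !tnth_iter_prodmap !iterD.
Qed.

Lemma orbit_diam_ltP n t (e : R) : 0 < e -> orbit_diam n t < e <->
  forall i j, mdist (iter n T (tnth t i)) (iter n T (tnth t j)) < e.
Proof.
move=> e0; split => [/bigmax_ltP[_ lt_e] i j|lt_e].
  by have /bigmax_ltP[_] := lt_e i isT; apply.
by apply/bigmax_ltP; split => // i _; apply/bigmax_ltP.
Qed.

Definition last_wide_at (e : R) (k : nat) : set (d.-tuple X) :=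
  [set t | ~ orbit_diam k t < e] `&`
  \bigcap_(n in [set n | (k < n)%N]) [set t | orbit_diam n t < e].

Lemma last_wide_at_wandering e k n : (0 < n)%N ->
  last_wide_at e k `&` iter n (prodmap T) @` last_wide_at e k = set0.
Proof.
move=> n0; apply/seteqP; split => // y [[wide _] [t [_ narrow] tk]].
apply: wide; rewrite -tk orbit_diam_iter_prodmap; apply: narrow.
by rewrite /= -{1}(addn0 k) ltn_add2l.
Qed.

Lemma asymptotic_offdiagonal_last_wide (t : d.-tuple X) :
  asymptotic T t -> ~ diagonal t -> exists m k, last_wide_at m.+1%:R^-1 k t.
Proof.
move=> asym offdiag.
have [i [j tij]] : exists i j, tnth t i <> tnth t j.
  apply: contrapT => no_pair; apply: offdiag => i j.
  by apply: contrapT => tij; apply: no_pair; exists i, j.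
have /exists_natSinv_lt[m m_lt] : 0 < mdist (tnth t i) (tnth t j) by rewrite mdist_gt0; apply/eqP.
have e0 := natSinv_gt0 R m; have [N _ small] := cvgr_lt _ asym _ e0.
have wide0 : exists k, ~~ (orbit_diam k t < m.+1%:R^-1).
  exists 0%N; apply/negP => /(orbit_diam_ltP _ _ e0)/(_ i j) /= lt_m.
  by have := lt_trans lt_m m_lt; rewrite ltxx.
have wide_bounded k : ~~ (orbit_diam k t < m.+1%:R^-1) -> (k <= N)%N.
  by apply: contraNT; rewrite -ltnNge => Nk; exact: small (ltnW Nk).
have [k /negP wide_k k_max] := ex_maxnP wide0 wide_bounded.
exists m, k; split => // n /= kn; apply: contraT => /k_max.
by rewrite leqNgt kn.
Qed.

End orbit_diameter.

Lemma continuous_iter (Y : topologicalType) (f : Y -> Y) :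
  continuous f -> forall n, continuous (iter n f).
Proof.
move=> cf; elim => [|n IH] x /=; first exact: cvg_id.
exact: continuous_comp (IH x) (cf _).
Qed.

Section orbit_diameter_measurable.
Context (R : realType) (X : metricType R) (x0 : X) (cX : compact [set: X])
  (T : X -> X) (cT : continuous T) (d : nat).
Local Notation B := (Borel X x0).

Lemma measurable_iter_tnth_mdist_lt n (i : 'I_d) (c : X) (r : R) :
  measurable [set t : d.-tuple B | mdist c (iter n T (tnth t i)) < r].
Proof.
have open_pre : open (iter n T @^-1` [set y | mdist c y < r]).
  have := (continuousP (iter n T)).1 (continuous_iter (n := n) cT) _ (mdist_ball_open c r); exact.
by have := measurable_tnth i measurableT (measurable_open (x0 := x0) open_pre); rewrite setTI.
Qed.

Lemma measurable_orbit_diam_lt n (e : R) : 0 < e ->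
  measurable [set t : d.-tuple B | orbit_diam T n t < e].
Proof.
move=> e0; have -> : [set t : d.-tuple B | orbit_diam T n t < e] =
    \bigcap_(i in [set: 'I_d]) \bigcap_(j in [set: 'I_d])
      [set t | mdist (iter n T (tnth t i)) (iter n T (tnth t j)) < e].
  apply/seteqP; split => t /=.
    by move/(orbit_diam_ltP T n t e0) => lt_e i _ j _; exact: lt_e.
  by move=> lt_e; apply/(orbit_diam_ltP T n t e0) => i j; exact: lt_e.
apply: fin_bigcap_measurable => [|i _]; first exact: finite_finset.
apply: fin_bigcap_measurable => [|j _]; first exact: finite_finset.
by apply: (measurable_mdist_lt x0 cX (f := fun t : d.-tuple B => iter n T (tnth t i))
  (g := fun t => iter n T (tnth t j))) => c r; exact: measurable_iter_tnth_mdist_lt.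
Qed.

Lemma measurable_last_wide_at m k :
  measurable (last_wide_at T (m.+1%:R^-1) k : set (d.-tuple B)).
Proof.
have e0 := natSinv_gt0 R m; apply: measurableI.
  by apply: measurableC; exact: measurable_orbit_diam_lt.
by apply: bigcap_measurableType => n _; exact: measurable_orbit_diam_lt.
Qed.

End orbit_diameter_measurable.

Theorem mainTheorem7 (R : realType) (X : metricType R) (T : X -> X) (d : nat)
  (hX : compact [set: X]) (hT : continuous T) (hd : (2 <= d)%N) (x0 : X)
  (lam : probability (Borel X x0) R)
  (hnonatomic : forall x : X, lam [set x] = 0%E)
  (lamd : {measure set (d.-tuple (Borel X x0)) -> \bar R})
  (hprod : forall A : 'I_d -> set (Borel X x0), (forall i, measurable (A i)) ->
      lamd [set t | forall i, A i (tnth t i)] = (\prod_(i < d) lam (A i))%E)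
  (hcons : conservative lamd (@prodmap (Borel X x0) d T)) :
  {ae lamd, forall t : d.-tuple (Borel X x0), ~ @asymptotic R X T d t}.
Proof.
have mW m k : measurable (last_wide_at T (m.+1%:R^-1) k : set (d.-tuple (Borel X x0))).
  exact: measurable_last_wide_at.
have wide_null m k : lamd.-negligible (last_wide_at T (m.+1%:R^-1) k).
  apply/negligibleP => //; apply: (conservative_wandering_null hcons (mW m k)) => n.
  exact: last_wide_at_wandering.
have : lamd.-negligible
    (@diagonal (Borel X x0) d `|` \bigcup_m \bigcup_k last_wide_at T (m.+1%:R^-1) k).
  apply: negligibleU; first by have := diagonal_negligible hnonatomic hX hd hprod.
  by apply: negligible_bigcup => m; apply: negligible_bigcup => k; exact: wide_null.
apply: negligibleS => t /= /contrapT asym; have [diag|offdiag] := pselect (diagonal t).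
  by left.
have [m [k wide]] := asymptotic_offdiagonal_last_wide asym offdiag.
by right; exists m => //; exists k.
Qed.
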